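(* Let $d\ge 1$ be an integer. For each $i\in[d]$ let $x^i=(x^i_1,x^i_2,x^i_3)\in\mathbb{R}^3$ with $x^i_1<x^i_2<x^i_3$, and for each $\mathbf t=(t_1,\dots,t_d)\in[3]^d$ let $z_{\mathbf t}\in\mathbb{R}^{d-1}$. Put $P_{\mathbf t}:=(x^1_{t_1},\dots,x^d_{t_d},z_{\mathbf t})\in\mathbb{R}^{2d-1}$ and, for $i\in[d]$ and $j\in[3]$, define $A^i_j:=\operatorname{conv}\{P_{\mathbf t}: \mathbf t\in[3]^d,\ t_i=j\}$. Then there exist an index $i\in[d]$ and a line $\ell\subset\mathbb{R}^{2d-1}$ such that every point $p\in\ell$ satisfies $p_k=x^k_2$ for all $k\in[d]\setminus\{i\}$ (where $p_k$ is the $k$-th coordinate of $p$), and $\ell$ intersects each of $A^i_1,A^i_2,A^i_3$.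
   Context: $[d]=\{1,\dots,d\}$, $[3]=\{1,2,3\}$. *)

From HB Require Import structures.
From mathcomp Require Import all_boot all_order all_algebra.
From mathcomp Require Import reals.
Set Implicit Arguments. Unset Strict Implicit. Unset Printing Implicit Defensive.
Import Order.TTheory GRing.Theory Num.Theory.
Local Open Scope ring_scope.

Definition in_conv (R : realType) (T : finType) (m : nat)
    (S : pred T) (P : T -> 'rV[R]_m) (p : 'rV[R]_m) : Prop :=
  exists lam : T -> R,
    [/\ forall t, 0 <= lam t,
        forall t, ~~ S t -> lam t = 0,
        \sum_(t : T) lam t = 1
      & p = \sum_(t : T) lam t *: P t].

Definition Ppt (R : realType) (d : nat) (x : 'I_d -> 'I_3 -> R)
    (z : {ffun 'I_d -> 'I_3} -> 'rV[R]_(d.-1)) (t : {ffun 'I_d -> 'I_3})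
    : 'rV[R]_(d + d.-1) :=
  row_mx (\row_(k < d) x k (t k)) (z t).

Definition coord_first (R : realType) (d : nat) (p : 'rV[R]_(d + d.-1))
    (k : 'I_d) : R := p ord0 (lshift d.-1 k).

(* For S a set of coordinates let mu_S be the product distribution on [3]^d
   whose k-th factor is, for k in S, the distribution on {1, 3} with mean
   x^k_2 (weights lam_k and 1 - lam_k on x^k_1 and x^k_3) and, for k not in S,
   the point mass at 2. The barycenter of the points P_t under mu_S is
   (x^1_2, ..., x^d_2, zeta_S) for some zeta_S in R^(d-1).
   Since d vectors of R^(d-1) are linearly dependent, Gordan's alternative
   yields a coordinate i and a convex combination w of the pairs (S, T) with
   i in S and i notin T such that sum w (zeta_S - zeta_T) = 0.
   Pinning coordinate i of mu_S to 1, resp. 3, and mixing over w gives points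
   U of A^i_1 and W of A^i_3. Then lam_i U + (1 - lam_i) W is the w-mixture of
   the barycenters of the mu_S, hence equals the w-mixture of the barycenters
   of the mu_T, which lies in A^i_2. The coordinates k <> i of U and W are
   x^k_2, so the line through U and W works. *)

From mathcomp Require Import all_boot all_order all_algebra.
From mathcomp Require Import reals.
From mathcomp Require Import ring lra.
From Stdlib Require Import Classical.
Set Implicit Arguments. Unset Strict Implicit. Unset Printing Implicit Defensive.
Import Order.TTheory GRing.Theory Num.Theory.
Local Open Scope ring_scope.

Section Dot.
Variables (R : comPzRingType) (m : nat).
Implicit Types u v w : 'rV[R]_m.

Definition dot u v : R := \sum_j u 0 j * v 0 j.

Lemma dotDl u v w : dot (u + v) w = dot u w + dot v w.
Proof. by rewrite /dot -big_split; apply: eq_bigr => j _; rewrite mxE mulrDl. Qed.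

Lemma dotZl a u v : dot (a *: u) v = a * dot u v.
Proof. by rewrite /dot mulr_sumr; apply: eq_bigr => j _; rewrite mxE mulrA. Qed.

Lemma dotDr u v w : dot u (v + w) = dot u v + dot u w.
Proof. by rewrite /dot -big_split; apply: eq_bigr => j _; rewrite mxE mulrDr. Qed.

Lemma dotZr a u v : dot u (a *: v) = a * dot u v.
Proof. by rewrite /dot mulr_sumr; apply: eq_bigr => j _; rewrite mxE mulrCA. Qed.

Lemma dotNl u v : dot (- u) v = - dot u v.
Proof. by rewrite -scaleN1r dotZl mulN1r. Qed.

Lemma dotNr u v : dot u (- v) = - dot u v.
Proof. by rewrite -scaleN1r dotZr mulN1r. Qed.

Lemma dot0l v : dot 0 v = 0.
Proof. by rewrite /dot big1 // => j _; rewrite mxE mul0r. Qed.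

Lemma dot_suml (I : finType) (a : I -> R) (u : I -> 'rV[R]_m) v :
  dot (\sum_i a i *: u i) v = \sum_i a i * dot (u i) v.
Proof.
rewrite (big_morph (dot^~ v) (fun u1 u2 => dotDl u1 u2 v) (dot0l v)).
by apply: eq_bigr => i _; rewrite dotZl.
Qed.

End Dot.

Lemma dotvv_gt0 (R : realDomainType) m (u : 'rV[R]_m) : u != 0 -> 0 < dot u u.
Proof.
case/rV0Pn => j uj; rewrite /dot (bigD1 j) //= ltr_pwDl ?sumr_ge0 // => [|k _].
  by rewrite -expr2 exprn_even_gt0.
by rewrite -expr2 sqr_ge0.
Qed.

Definition convex_weights (R : numDomainType) (I : finType) (A : {pred I}) (w : I -> R) :=
  [/\ forall i, 0 <= w i, forall i, i \notin A -> w i = 0 & \sum_i w i = 1].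

Definition dirac (R : pzSemiRingType) (T : eqType) (a : T) : T -> R := fun b => (b == a)%:R.

Lemma sum_dirac_scale (R : pzSemiRingType) (V : lSemiModType R) (I : finType) a (v : I -> V) :
  \sum_i dirac R a i *: v i = v a.
Proof.
by rewrite (bigD1 a) //= big1 => [|i /negbTE ia]; rewrite /dirac ?eqxx ?ia ?scale1r ?scale0r ?addr0.
Qed.

Lemma sum_dirac (R : pzSemiRingType) (I : finType) a (f : I -> R) :
  \sum_i dirac R a i * f i = f a.
Proof.
by rewrite (bigD1 a) //= big1 => [|i /negbTE ia]; rewrite /dirac ?eqxx ?ia ?mul1r ?mul0r ?addr0.
Qed.

Lemma sumr_dirac (R : pzSemiRingType) (I : finType) (a : I) : \sum_i dirac R a i = 1.
Proof. by rewrite -[RHS](sum_dirac a (fun=> 1)); apply: eq_bigr => i _; rewrite mulr1. Qed.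

Lemma dirac_convex (R : numDomainType) (I : finType) (A : {pred I}) a :
  a \in A -> convex_weights A (dirac R a).
Proof.
move=> Aa; rewrite /convex_weights; split=> [i|i Ai|]; rewrite /dirac ?ler0n //.
  by case: eqP Ai => // ->; rewrite Aa.
exact: sumr_dirac.
Qed.

Lemma convex_weightsS (R : numDomainType) (I : finType) (A B : {pred I}) (w : I -> R) :
  {subset A <= B} -> convex_weights A w -> convex_weights B w.
Proof. by move=> AB [w0 wA w1]; rewrite /convex_weights; split=> // i /(contra (AB i)) /wA. Qed.

Lemma conv_segments (R : numDomainType) m (I : finType) (B : {set I}) i0
    (p : I -> 'rV[R]_m) (s w : I -> R) :
    (forall i, i \in B -> 0 <= s i <= 1) -> convex_weights B w ->
  exists2 w', convex_weights (i0 |: B) w'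
    & \sum_i w' i *: p i = \sum_i w i *: (s i *: p i + (1 - s i) *: p i0).
Proof.
move=> s01 [w0 wB w1].
have ws_ge0 i : 0 <= w i * s i /\ 0 <= w i * (1 - s i).
  have [/s01/andP[s0 s1]|/wB->] := boolP (i \in B); last by rewrite !mul0r.
  by rewrite !mulr_ge0 // subr_ge0.
exists (fun i => w i * s i + dirac R i0 i * \sum_j w j * (1 - s j)).
  split=> [i|i|].
  - by rewrite addr_ge0 ?(ws_ge0 i).1 // mulr_ge0 ?ler0n // sumr_ge0 // => j _; case: (ws_ge0 j).
  - by rewrite !inE negb_or /dirac => /andP[/negbTE-> /wB->]; rewrite !mul0r addr0.
  - rewrite big_split /= sum_dirac -big_split /= -[RHS]w1.
    by apply: eq_bigr => i _; rewrite -mulrDr addrC subrK mulr1.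
under eq_bigr do rewrite scalerDl -!scalerA.
rewrite big_split /= sum_dirac_scale scaler_suml -big_split /=.
by apply: eq_bigr => i _; rewrite scalerDr !scalerA.
Qed.

Lemma exists_dominating (R : realFieldType) (I : finType) (P : {pred I}) (a b : I -> R) :
    (forall i, i \in P -> 0 < a i) ->
  exists2 mu, 0 <= mu & forall i, i \in P -> 0 < mu * a i + b i.
Proof.
move=> a_gt0; have r_ge0 i : i \in P -> 0 <= `|b i| / a i by move/a_gt0/ltW; exact: divr_ge0.
exists (1 + \sum_(i in P) `|b i| / a i) => [|i Pi]; first by rewrite addr_ge0 ?sumr_ge0.
have ai_gt0 := a_gt0 i Pi.
have : `|b i| / a i <= \sum_(j in P) `|b j| / a j.
  by rewrite (bigD1 i) //= lerDl sumr_ge0 // => j /andP[/r_ge0].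
rewrite ler_pdivrMr // => le_b.
have := lerNnormlW le_b; rewrite mulrDl mul1r; lra.
Qed.

Lemma gordan (R : realFieldType) m (I : finType) (A : {set I}) (p : I -> 'rV[R]_m) :
  (exists2 w, convex_weights A w & \sum_i w i *: p i = 0) \/
  (exists h, forall i, i \in A -> 0 < dot h (p i)).
Proof.
have [n] := ubnP #|A|; elim: n => // n IH in A p *; rewrite ltnS => cardA.
have [->|[i0 Ai0]] := set_0Vmem A; first by right; exists 0 => i; rewrite inE.
set B := A :\ i0; set q := p i0.
have cardB : (#|B| < n)%N by rewrite (cardsD1 i0 A) Ai0 in cardA.
have defA : A = i0 |: B by rewrite setD1K.
have [[w wB wp]|[h hB]] := IH B p cardB.
  by left; exists w => //; apply: convex_weightsS wB => i /setD1P[].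
have [q0|q_neq0] := eqVneq q 0.
  by left; exists (dirac R i0); [exact: dirac_convex | rewrite sum_dirac_scale].
suff [|[k kB kq]] : (exists2 w, convex_weights A w & \sum_i w i *: p i = 0) \/
    exists2 k, (forall i, i \in B -> 0 < dot k (p i)) & 0 <= dot k q.
- by left.
- right; have [mu mu_ge0 mu_k] := exists_dominating (fun i => dot q (p i)) kB.
  exists (mu *: k + q) => i; rewrite defA dotDl dotZl => /setU1P[->|/mu_k //].
  by rewrite ltr_wpDl ?mulr_ge0 ?dotvv_gt0.
set c := dot h q; have [c_ge0|c_lt0] := leP 0 c; first by right; exists h.
(* [s i] slides [p i] towards [q] onto the hyperplane [dot h _ = 0]; a
   separator [g] of the slid points combines with [h] into one vanishing at [q]. *)
pose s i := c / (c - dot h (p i)).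
have s01 i : i \in B -> 0 <= s i <= 1.
  move/hB => hi; have cai : c - dot h (p i) < 0 by lra.
  by rewrite /s ler_ndivlMr // ler_ndivrMr // mul0r mul1r; apply/andP; split; lra.
have [[w wB wp]|[g gB]] := IH B (fun i => s i *: p i + (1 - s i) *: q) cardB.
  left; have [w' w'A w'p] := conv_segments i0 p s01 wB.
  by exists w'; [rewrite defA | rewrite w'p].
right; exists (dot g q *: h - c *: g); last by rewrite dotDl dotNl !dotZl mulrC subrr.
move=> i Bi; have := gB i Bi; have := hB i Bi.
rewrite dotDl dotNl !dotZl dotDr !dotZr /s; set a := dot h (p i) => a_gt0.
have ac_gt0 : 0 < a - c by lra.
have -> : dot g q * a - c * dot g (p i)
    = (a - c) * (c / (c - a) * dot g (p i) + (1 - c / (c - a)) * dot g q).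
  by field; apply: ltr0_neq0; lra.
exact: mulr_gt0.
Qed.

Lemma exists_linear_relation (F : fieldType) n m (h : 'I_n -> 'rV[F]_m) :
  (m < n)%N -> exists2 a : 'rV[F]_n, a != 0 & \sum_i a 0 i *: h i = 0.
Proof.
move=> lt_mn; pose H := \matrix_i h i.
have : kermx H != 0.
  by rewrite kermx_eq0 -row_leq_rank -ltnNge (leq_ltn_trans (rank_leq_col H)).
case/rowV0Pn => a /sub_kermxP aH a_neq0; exists a => //.
by rewrite -[RHS]aH mulmx_sum_row; under [RHS]eq_bigr do rewrite rowK.
Qed.

Definition separated_pairs d (i : 'I_d) : {set {set 'I_d} * {set 'I_d}} :=
  [set ST : {set 'I_d} * {set 'I_d} | (i \in ST.1) && (i \notin ST.2)].

Lemma exists_balanced_split (R : realFieldType) d m (Q : {set 'I_d} -> 'rV[R]_m) :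
    (m < d)%N ->
  exists i, exists2 w, convex_weights (separated_pairs i) w
    & \sum_(ST : {set 'I_d} * {set 'I_d}) w ST *: (Q ST.1 - Q ST.2) = 0.
Proof.
move=> lt_md; apply: NNPP => no_split.
have sep i : exists h, forall ST, ST \in separated_pairs i ->
    0 < dot h (Q ST.1 - Q ST.2).
  have [w_ex|//] := gordan (separated_pairs i) (fun ST => Q ST.1 - Q ST.2).
  by case: no_split; exists i.
have [h hsep] := fin_all_exists sep.
have [a /rV0Pn[i0 ai0] ah] := exists_linear_relation h lt_md.
(* Splitting by the sign of the relation [a] makes every term of
   [dot (\sum_i a 0 i *: h i) q = 0] nonnegative, and the one at [i0] positive. *)
pose S := [set i | 0 < a 0 i]; pose q := Q S - Q (~: S).
have term_gt0 i : a 0 i != 0 -> 0 < a 0 i * dot (h i) q.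
  move=> ai; case: (ltgtP (a 0 i) 0) => [a_lt0|a_gt0|a0]; last by rewrite a0 eqxx in ai.
    have := hsep i (~: S, S); rewrite !inE /= ltNge ltW //= => /(_ isT).
    by rewrite -opprB dotNr -mulrNN; apply: mulr_gt0; rewrite oppr_gt0.
  by have := hsep i (S, ~: S); rewrite !inE /= a_gt0 => /(_ isT); apply: mulr_gt0.
have term_ge0 i : 0 <= a 0 i * dot (h i) q.
  by have [->|/term_gt0/ltW //] := eqVneq (a 0 i) 0; rewrite mul0r.
have : \sum_i a 0 i * dot (h i) q = 0 by rewrite -dot_suml ah dot0l.
rewrite (bigD1 i0) //=; apply/eqP; rewrite gt_eqF // ltr_pwDl ?term_gt0 //.
exact: sumr_ge0.
Qed.

Section ProductWeights.
Variables (R : numDomainType) (I J : finType) (m : I -> J -> R).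

Definition prodw (t : {ffun I -> J}) : R := \prod_k m k (t k).

Lemma sum_prodw_prod (f : I -> J -> R) :
  \sum_t prodw t * \prod_k f k (t k) = \prod_k \sum_j m k j * f k j.
Proof. by rewrite bigA_distr_bigA; apply: eq_bigr => t _; rewrite -big_split. Qed.

Lemma prodwD1 (t : {ffun I -> J}) k0 :
  prodw t = m k0 (t k0) * \prod_(k | k != k0) m k (t k).
Proof. exact: bigD1. Qed.

Lemma prodw_eq0 (t : {ffun I -> J}) k : m k (t k) = 0 -> prodw t = 0.
Proof. by move=> mk0; rewrite (prodwD1 _ k) mk0 mul0r. Qed.

Hypothesis m_convex : forall k, convex_weights predT (m k).

Lemma sum_prodw_coord k0 (g : J -> R) : \sum_t prodw t * g (t k0) = \sum_j m k0 j * g j.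
Proof.
pose f k j := if k == k0 then g j else 1.
have f_k0 (t : {ffun I -> J}) : \prod_k f k (t k) = g (t k0).
  by rewrite (bigD1 k0) //= /f eqxx big1 ?mulr1 // => k /negbTE ->.
under eq_bigr do rewrite -f_k0.
rewrite sum_prodw_prod (bigD1 k0) //= [X in _ * X]big1 ?mulr1 => [|k /negbTE k_neq0].
  by apply: eq_bigr => j _; rewrite /f eqxx.
by rewrite /f k_neq0; under eq_bigr do rewrite mulr1; case: (m_convex k).
Qed.

Lemma prodw_convex : convex_weights predT prodw.
Proof.
split=> // [t|]; first by apply: prodr_ge0 => k _; case: (m_convex k).
transitivity (\prod_k \sum_j m k j * 1).
  by rewrite -sum_prodw_prod; apply: eq_bigr => t _; rewrite big1_eq mulr1.
by rewrite big1 // => k _; under eq_bigr do rewrite mulr1; case: (m_convex k).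
Qed.

End ProductWeights.

Lemma sum_row_mx (V : nmodType) (I : finType) m n1 n2
    (A : I -> 'M[V]_(m, n1)) (B : I -> 'M[V]_(m, n2)) :
  \sum_i row_mx (A i) (B i) = row_mx (\sum_i A i) (\sum_i B i).
Proof. by elim/big_rec3: _ => [|i M A' B' _ ->]; rewrite ?row_mx0 ?add_row_mx. Qed.

Lemma in_conv_mixture (R : realType) (K T : finType) m (A : {pred K}) (S : pred T)
    (P : T -> 'rV[R]_m) (w : K -> R) (c : K -> T -> R) :
    convex_weights A w -> (forall s, convex_weights S (c s)) ->
  in_conv S P (\sum_s w s *: \sum_t c s t *: P t).
Proof.
move=> [w0 _ w1] c_conv; exists (fun t => \sum_s w s * c s t); split.
- by move=> t; apply: sumr_ge0 => s _; rewrite mulr_ge0 //; case: (c_conv s).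
- by move=> t St; apply: big1 => s _; case: (c_conv s) => _ /(_ t St) -> _; rewrite mulr0.
- rewrite exchange_big -[RHS]w1; apply: eq_bigr => s _.
  by rewrite -mulr_sumr; case: (c_conv s) => _ _ ->; rewrite mulr1.
- under [RHS]eq_bigr do rewrite scaler_suml.
  rewrite exchange_big; apply: eq_bigr => s _; rewrite scaler_sumr.
  by apply: eq_bigr => t _; rewrite scalerA.
Qed.

Lemma coord_first_sum (R : realType) d (K : finType) (w : K -> R) (p : K -> 'rV[R]_(d + d.-1)) k :
  coord_first (\sum_s w s *: p s) k = \sum_s w s * coord_first (p s) k.
Proof. by rewrite /coord_first summxE; apply: eq_bigr => s _; rewrite mxE. Qed.

Lemma coord_first_line (R : realType) d (a b : 'rV[R]_(d + d.-1)) s k :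
  coord_first (a + s *: (b - a)) k = coord_first a k + s * (coord_first b k - coord_first a k).
Proof. by rewrite /coord_first !mxE. Qed.

Lemma eq_mixture (R : numDomainType) (V : lmodType R) (K : finType) (A : {pred K})
    (w : K -> R) (F G : K -> V) :
  convex_weights A w -> {in A, F =1 G} -> \sum_s w s *: F s = \sum_s w s *: G s.
Proof.
move=> [_ wA _] FG; apply: eq_bigr => s _.
by have [/FG->|/wA->] := boolP (s \in A); rewrite ?scale0r.
Qed.

Section Construction.
Variables (R : realType) (d : nat) (x : 'I_d -> 'I_3 -> R).
Variable z : {ffun 'I_d -> 'I_3} -> 'rV[R]_(d.-1).
Hypothesis hx : forall k, x k 0 < x k 1 /\ x k 1 < x k 2.
Implicit Types (S T : {set 'I_d}) (i k : 'I_d) (j : 'I_3) (t : {ffun 'I_d -> 'I_3}).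

Definition lam k := (x k 2 - x k 1) / (x k 2 - x k 0).

Definition mid k : 'I_3 -> R := fun j => lam k * dirac R 0 j + (1 - lam k) * dirac R 2 j.

Definition marg (S : {set 'I_d}) k : 'I_3 -> R := if k \in S then mid k else dirac R 1.

Definition pin S i j k : 'I_3 -> R := if k == i then dirac R j else marg S k.

Definition bary (c : {ffun 'I_d -> 'I_3} -> R) := \sum_t c t *: Ppt x z t.

Lemma lam_mean k : lam k * x k 0 + (1 - lam k) * x k 2 = x k 1.
Proof. by have [x01 x12] := hx k; rewrite /lam; field; lra. Qed.

Lemma mid_convex k : convex_weights predT (mid k).
Proof.
have [x01 x12] := hx k; have x02 : 0 < x k 2 - x k 0 by lra.
have l0 : 0 <= lam k by rewrite divr_ge0 //; lra.
have l1 : lam k <= 1 by rewrite ler_pdivrMr // mul1r; lra.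
split=> // [j|].
  by apply: addr_ge0; apply: mulr_ge0; rewrite ?subr_ge0 ?ler0n.
by rewrite big_split /= -!mulr_sumr !sumr_dirac !mulr1 addrC subrK.
Qed.

Lemma marg_convex S k : convex_weights predT (marg S k).
Proof. by rewrite /marg; case: ifP => _; [exact: mid_convex | exact: dirac_convex]. Qed.

Lemma pin_convex S i j k : convex_weights predT (pin S i j k).
Proof. by rewrite /pin; case: ifP => _; [exact: dirac_convex | exact: marg_convex]. Qed.

Lemma prodw_pin_convex S i j :
  convex_weights (fun t : {ffun 'I_d -> 'I_3} => t i == j) (prodw (pin S i j)).
Proof.
have [c_ge0 _ c_sum1] := prodw_convex (pin_convex S i j).
split=> // t tij; apply: (prodw_eq0 (k := i)).
by rewrite /pin eqxx /dirac (negbTE (tij : t i != j)).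
Qed.

Lemma mean_marg S k : \sum_j marg S k j * x k j = x k 1.
Proof.
rewrite /marg; case: ifP => _; last exact: sum_dirac.
rewrite -lam_mean /mid.
under eq_bigr do rewrite mulrDl -[lam k * _ * _]mulrA -[(1 - lam k) * _ * _]mulrA.
by rewrite big_split /= -!mulr_sumr !sum_dirac.
Qed.

Lemma bary_row_mx c :
  bary c = row_mx (\row_k \sum_t c t * x k (t k)) (\sum_t c t *: z t).
Proof.
apply/rowP => col; rewrite summxE -(splitK col).
case: (split col) => k /=; rewrite ?row_mxEl ?row_mxEr ?mxE ?summxE;
  by apply: eq_bigr => t _; rewrite mxE /Ppt ?row_mxEl ?row_mxEr ?mxE.
Qed.

Lemma coord_bary_prodw m k : (forall k, convex_weights predT (m k)) ->
  coord_first (bary (prodw m)) k = \sum_j m k j * x k j.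
Proof. by move=> m_conv; rewrite bary_row_mx /coord_first row_mxEl mxE sum_prodw_coord. Qed.

Lemma coord_bary_pin S i j k :
  coord_first (bary (prodw (pin S i j))) k = if k == i then x i j else x k 1.
Proof.
rewrite coord_bary_prodw => [|l]; last exact: pin_convex.
by rewrite /pin; case: eqP => [->|_]; [exact: sum_dirac | exact: mean_marg].
Qed.

Lemma prodw_marg_in S i t : i \in S ->
  prodw (marg S) t = lam i * prodw (pin S i 0) t + (1 - lam i) * prodw (pin S i 2) t.
Proof.
move=> Si; have pin_off j :
    \prod_(k | k != i) pin S i j k (t k) = \prod_(k | k != i) marg S k (t k).
  by apply: eq_bigr => k /negbTE ki; rewrite /pin ki.
by rewrite !(prodwD1 _ _ i) !pin_off /pin eqxx /marg Si /mid mulrDl !mulrA.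
Qed.

Lemma prodw_marg_notin T i t : i \notin T -> prodw (marg T) t = prodw (pin T i 1) t.
Proof.
move=> Ti; rewrite /prodw; apply: eq_bigr => k _; rewrite /pin.
by case: eqP => [->|//]; rewrite /marg (negbTE Ti).
Qed.

Lemma bary_marg_in S i : i \in S -> bary (prodw (marg S))
  = lam i *: bary (prodw (pin S i 0)) + (1 - lam i) *: bary (prodw (pin S i 2)).
Proof.
move=> Si; rewrite /bary !scaler_sumr -big_split; apply: eq_bigr => t _ /=.
by rewrite (prodw_marg_in t Si) scalerDl !scalerA.
Qed.

Lemma bary_marg_notin T i : i \notin T -> bary (prodw (marg T)) = bary (prodw (pin T i 1)).
Proof. by move=> Ti; rewrite /bary; apply: eq_bigr => t _; rewrite (prodw_marg_notin t Ti). Qed.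

Definition zbary S := \sum_t prodw (marg S) t *: z t.

Lemma bary_marg S : bary (prodw (marg S)) = row_mx (\row_k x k 1) (zbary S).
Proof.
rewrite bary_row_mx; congr row_mx; apply/rowP => k; rewrite !mxE sum_prodw_coord ?mean_marg //.
exact: marg_convex.
Qed.

Section Mixture.
Variables (i : 'I_d) (w : {set 'I_d} * {set 'I_d} -> R).
Hypothesis w_conv : convex_weights (separated_pairs i) w.

Definition pin_mix j (side : {set 'I_d} * {set 'I_d} -> {set 'I_d}) :=
  \sum_ST w ST *: bary (prodw (pin (side ST) i j)).

Lemma pin_mix_in_conv j side :
  in_conv (fun t : {ffun 'I_d -> 'I_3} => t i == j) (Ppt x z) (pin_mix j side).
Proof. by apply: in_conv_mixture w_conv _ => ST; apply: prodw_pin_convex. Qed.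

Lemma coord_pin_mix j side k : coord_first (pin_mix j side) k = if k == i then x i j else x k 1.
Proof.
case: w_conv => _ _ w1; rewrite coord_first_sum.
by under eq_bigr do rewrite coord_bary_pin; rewrite -mulr_suml w1 mul1r.
Qed.

Hypothesis w_bal : \sum_ST w ST *: (zbary ST.1 - zbary ST.2) = 0.

Lemma bary_marg_balanced :
  \sum_ST w ST *: bary (prodw (marg ST.1)) = \sum_ST w ST *: bary (prodw (marg ST.2)).
Proof.
apply/eqP; rewrite -subr_eq0 -sumrB.
under eq_bigr do rewrite -scalerBr !bary_marg opp_row_mx add_row_mx subrr scale_row_mx scaler0.
by rewrite sum_row_mx big1_eq w_bal row_mx0.
Qed.

Lemma pin_mix_collinear :
  pin_mix 0 fst + (1 - lam i) *: (pin_mix 2 fst - pin_mix 0 fst) = pin_mix 1 snd.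
Proof.
have -> : pin_mix 0 fst + (1 - lam i) *: (pin_mix 2 fst - pin_mix 0 fst) = \sum_ST w ST *:
    (lam i *: bary (prodw (pin ST.1 i 0)) + (1 - lam i) *: bary (prodw (pin ST.1 i 2))).
  rewrite /pin_mix -sumrB scaler_sumr -big_split; apply: eq_bigr => ST _.
  by apply/rowP => c; rewrite !mxE; ring.
transitivity (\sum_ST w ST *: bary (prodw (marg ST.1))).
  symmetry; apply: (eq_mixture w_conv) => ST.
  by rewrite inE => /andP[/bary_marg_in-> _].
rewrite bary_marg_balanced; apply: (eq_mixture w_conv) => ST.
by rewrite inE => /andP[_ /bary_marg_notin->].
Qed.

End Mixture.

End Construction.

Lemma ord3_cases (j : 'I_3) : [\/ j = 0, j = 1 | j = 2].
Proof.
by case: j => [[|[|[|]]]] //= ?; [constructor 1 | constructor 2 | constructor 3];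
  apply: val_inj.
Qed.

Theorem proposition5 (R : realType) (d : nat) (hd : (0 < d)%N)
    (x : 'I_d -> 'I_3 -> R)
    (hx : forall i : 'I_d, x i 0 < x i 1 /\ x i 1 < x i 2)
    (z : {ffun 'I_d -> 'I_3} -> 'rV[R]_(d.-1)) :
  exists (i : 'I_d) (a v : 'rV[R]_(d + d.-1)),
    [/\ v != 0,
        forall (s : R) (k : 'I_d), k != i -> coord_first (a + s *: v) k = x k 1
      & forall j : 'I_3, exists s : R,
          in_conv (fun t : {ffun 'I_d -> 'I_3} => t i == j) (Ppt x z) (a + s *: v)].
Proof.
have lt_d : (d.-1 < d)%N by rewrite ltn_predL.
have [i [w w_conv w_bal]] := exists_balanced_split (zbary x z) lt_d.
have coord := coord_pin_mix z hx w_conv.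
set U := pin_mix x z i w 0 fst; set W := pin_mix x z i w 2 fst.
exists i, U, (W - U); split.
- apply/eqP => v0; have := coord_first_line U W 1 i.
  by rewrite v0 scaler0 addr0 !coord eqxx; have [x01 x12] := hx i; lra.
- by move=> s k ki; rewrite coord_first_line !coord (negbTE ki) subrr mulr0 addr0.
move=> j; case: (ord3_cases j) => ->.
- by exists 0; rewrite scale0r addr0; apply: pin_mix_in_conv.
- by exists (1 - lam x i); rewrite (pin_mix_collinear hx w_conv w_bal); apply: pin_mix_in_conv.
- by exists 1; rewrite scale1r addrC subrK; apply: pin_mix_in_conv.
Qed.
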